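(* Let $M$ be the $3\times 2$ array of cells (3 columns, 2 rows) whose standard figure $F\subseteq[0,3]\times[0,2]\subseteq\mathbb{R}^2$ is the union of the line segment from $(0,0)$ to $(2,2)$ (an increasing segment passing through the bottom cell of column 1 and the top cell of column 2), the segment from $(2,1)$ to $(3,0)$ (decreasing, in the bottom cell of column 3) and the segment from $(2,1)$ to $(3,2)$ (increasing, in the top cell of column 3). Then a permutation is a simple permutation avoiding both $4312$ and $3142$ if and only if it is a simple permutation lying in $\operatorname{Geom}(M)$.
   Context: A permutation $\pi$ avoids $\sigma$ if no subsequence of $\pi$ is order-isomorphic to $\sigma$. An interval of a permutation $\pi$ is a set of contiguous positions $\{a,a+1,\dots,b\}$ whose values $\{\pi(i)\}$ also form a set of contiguous integers; intervals of size $0$, $1$ and $n$ are trivial, and $\pi$ is simple if all its intervals are trivial. For a figure $F\subseteq\mathbb{R}^2$, $\operatorname{Geom}(M)$ is the set of all permutations obtained as follows: choose finitely many points of $F$, no two on a common horizontal or vertical line, label them $1,\dots,n$ from bottom to top, and read the labels from left to right. (In matrix form, with the top row displayed first, $M=\begin{pmatrix}0&1&1\\1&0&-1\end{pmatrix}$, where $1$ denotes an increasing diagonal segment across the cell, $-1$ a decreasing one, $0$ an empty cell.) *)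

From HB Require Import structures.
From mathcomp Require Import all_boot all_order all_algebra all_fingroup.
From mathcomp Require Import reals.
Set Implicit Arguments. Unset Strict Implicit. Unset Printing Implicit Defensive.
Import Order.TTheory GRing.Theory Num.Theory.

(* A permutation of length n is p : 'S_n; position i (0-indexed, left to
   right) carries value p i (0-indexed). *)

Definition contains_pattern (n : nat) (p : 'S_n) (s : seq nat) : Prop :=
  exists f : 'I_(size s) -> 'I_n,
    (forall a b : 'I_(size s), (a < b)%N -> (f a < f b)%N) /\
    (forall a b : 'I_(size s),
        (p (f a) < p (f b))%N = (nth 0%N s a < nth 0%N s b)%N).

Definition avoids (n : nat) (p : 'S_n) (s : seq nat) : Prop :=
  ~ contains_pattern p s.

Definition is_interval (n : nat) (p : 'S_n) (a b : nat) : Prop :=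
  (a <= b)%N /\ (b < n)%N /\
  exists lo hi : nat, forall v : 'I_n,
    (v \in [set p i | i : 'I_n & (a <= i <= b)%N]) = (lo <= v <= hi)%N.

Definition simple_perm (n : nat) (p : 'S_n) : Prop :=
  forall a b : nat, is_interval p a b ->
    (b - a).+1 = 1%N \/ (b - a).+1 = n.

Local Open Scope ring_scope.

(* The standard figure F of M = (0 1 1 / 1 0 -1) in [0,3]x[0,2]. *)
Definition in_figure (R : realType) (x y : R) : Prop :=
  (0 <= x <= 2 /\ y = x) \/
  (2 <= x <= 3 /\ y = 3 - x) \/
  (2 <= x <= 3 /\ y = x - 1).

(* p is in Geom(M): there are n points (x i, y i) of F, the i-th from the
   left carrying label p i, with labels increasing from bottom to top
   (and hence no two points on a common horizontal or vertical line). *)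
Definition in_geom (R : realType) (n : nat) (p : 'S_n) : Prop :=
  exists (x y : 'I_n -> R),
    (forall i j : 'I_n, (i < j)%N -> x i < x j) /\
    (forall i j : 'I_n, (p i < p j)%N -> y i < y j) /\
    (forall i : 'I_n, in_figure (x i) (y i)).

(* Let m be the position of the maximum n.  Simplicity is used through one
   device: a value range [lo, hi] whose positions do not form a block can be
   widened by the value of an intruding position, which cannot go on forever.
   With 3142-avoidance this shows that the entries up to m increase; with
   4312-avoidance (the entries right of m avoid 312) it shows that every entry
   right of m is a new maximum or a new minimum of those entries.  Put the
   increasing prefix on the diagonal and the k-th entry right of m on the
   increasing or decreasing arm of the third column at distance about k from
   the line y = 1.  Conversely, on those arms |y - 1| increases with x, and
   both a 4312 and a 3142 in the figure would force three points on the arms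
   whose last value lies strictly between the first two. *)

From HB Require Import structures.
From mathcomp Require Import all_boot all_order all_algebra all_fingroup.
From mathcomp Require Import reals.
From mathcomp Require Import zify lra.
Set Implicit Arguments. Unset Strict Implicit. Unset Printing Implicit Defensive.
Import Order.TTheory GRing.Theory Num.Theory.

Section Patterns.
Variables (n : nat) (p : 'S_n).

Lemma contains_pattern4P (s0 s1 s2 s3 : nat) :
  contains_pattern p [:: s0; s1; s2; s3] <->
  exists i j k l : 'I_n, [/\ i < j, j < k, k < l &
    (forall a b : 'I_4, (p (nth i [:: i; j; k; l] a) < p (nth i [:: i; j; k; l] b))
                        = (nth 0 [:: s0; s1; s2; s3] a < nth 0 [:: s0; s1; s2; s3] b))].
Proof.
split=> [[f [f_incr f_iso]]|[i [j [k [l [ij jk kl iso]]]]]].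
  have f_nth (a : 'I_4) : f a = nth (f ord0) [:: f ord0; f (inord 1); f (inord 2); f (inord 3)] a.
    by case: a => [[|[|[|[|a]]]] Ha] //=; congr f; apply: ord_inj; rewrite /= ?inordK.
  exists (f ord0), (f (inord 1)), (f (inord 2)), (f (inord 3)).
  split; try by apply: f_incr; rewrite ?inordK.
  by move=> a b; rewrite -!f_nth.
exists (fun a : 'I_4 => nth i [:: i; j; k; l] a); split=> //.
by move=> [[|[|[|[|a]]]] Ha] [[|[|[|[|b]]]] Hb] //= _; lia.
Qed.

Lemma contains_3142P :
  contains_pattern p [:: 3; 1; 4; 2] <->
  exists i j k l : 'I_n, [/\ i < j, j < k, k < l & p j < p l < p i /\ p i < p k].
Proof.
rewrite contains_pattern4P; split=> -[i [j [k [l [ij jk kl iso]]]]];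
  exists i, j, k, l; split=> //.
  move: (iso (inord 1) (inord 3)) (iso (inord 3) ord0) (iso ord0 (inord 2)).
  by rewrite /= !inordK //= => -> -> ->.
by move=> [[|[|[|[|a]]]] Ha] [[|[|[|[|b]]]] Hb] //=; lia.
Qed.

Lemma contains_4312P :
  contains_pattern p [:: 4; 3; 1; 2] <->
  exists i j k l : 'I_n, [/\ i < j, j < k, k < l & p k < p l < p j /\ p j < p i].
Proof.
rewrite contains_pattern4P; split=> -[i [j [k [l [ij jk kl iso]]]]];
  exists i, j, k, l; split=> //.
  move: (iso (inord 2) (inord 3)) (iso (inord 3) (inord 1)) (iso (inord 1) ord0).
  by rewrite /= !inordK //= => -> -> ->.
by move=> [[|[|[|[|a]]]] Ha] [[|[|[|[|b]]]] Hb] //=; lia.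
Qed.
End Patterns.

Lemma bounded_widening_absurd (N : nat) (Q : nat -> nat -> Prop) :
  (forall lo hi, Q lo hi -> hi < N) ->
  (forall lo hi, Q lo hi -> exists lo' hi', Q lo' hi' /\ hi - lo < hi' - lo') ->
  forall lo hi, ~ Q lo hi.
Proof.
move=> Q_bound Q_widen.
suff no_Q k : forall lo hi, N - (hi - lo) <= k -> ~ Q lo hi by move=> lo hi; exact: no_Q.
elim: k => [|k IHk] lo hi k_ge HQ; first by have := Q_bound _ _ HQ; lia.
have [lo' [hi' [HQ' wider]]] := Q_widen _ _ HQ.
by apply: (IHk lo' hi') => //; have := Q_bound _ _ HQ'; lia.
Qed.

Section SimplePermutations.
Variables (n : nat) (p : 'S_n).

Lemma perm_val_inj (i j : 'I_n) : p i = p j :> nat -> i = j.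
Proof. by move/val_inj/perm_inj. Qed.

Lemma perm_val_surj (v : nat) : v < n -> exists i : 'I_n, p i = v :> nat.
Proof. by move=> lt_vn; exists (p^-1 (Ordinal lt_vn))%g; rewrite permKV. Qed.

Lemma is_interval_of_range (a b : 'I_n) (lo hi : nat) : a <= b ->
  (forall i : 'I_n, a <= i <= b -> lo <= p i <= hi) ->
  (forall i : 'I_n, lo <= p i <= hi -> a <= i <= b) -> is_interval p a b.
Proof.
move=> le_ab to_range from_range; do 2!split=> //; exists lo, hi => v.
apply/imsetP/idP=> [[i]|v_range]; first by rewrite inE => /to_range ? ->.
by exists (p^-1 v)%g; rewrite ?permKV // inE from_range ?permKV.
Qed.

(* The disjunction only excludes the trivial interval of size n. *)
Lemma simple_range_split (lo hi : nat) : simple_perm p -> lo < hi -> hi < n ->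
  (forall i : 'I_n, lo <= p i <= hi -> 0 < i) \/
  (forall i : 'I_n, lo <= p i <= hi -> i < n.-1) ->
  exists u q v : 'I_n,
    [/\ u < q, q < v, lo <= p u <= hi, lo <= p v <= hi & ~~ (lo <= p q <= hi)].
Proof.
move=> p_simple lt_lo_hi lt_hi_n proper.
pose in_range (i : 'I_n) := lo <= p i <= hi.
have [ilo p_ilo] := perm_val_surj (ltn_trans lt_lo_hi lt_hi_n).
have [ihi p_ihi] := perm_val_surj lt_hi_n.
have ilo_in : in_range ilo by rewrite /in_range p_ilo; lia.
have ihi_in : in_range ihi by rewrite /in_range p_ihi; lia.
case: (arg_minnP val ilo_in) => a a_in a_min.
case: (arg_maxnP val ilo_in) => b b_in b_max.
have [/existsP[q /and3P[aq qb q_out]]|no_gap] :=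
  boolP [exists q : 'I_n, [&& a < q, q < b & ~~ in_range q]].
  by exists a, q, b.
have lt_ab : a < b.
  have neq_ilo_ihi : ilo != ihi by apply/eqP=> eq_ilo; move: p_ilo p_ihi; rewrite eq_ilo; lia.
  have := a_min _ ihi_in; have := b_max _ ilo_in; have := a_min _ ilo_in; have := b_max _ ihi_in.
  move: neq_ilo_ihi; rewrite -val_eqE /=; lia.
have : is_interval p a b.
  apply: (is_interval_of_range (lo := lo) (hi := hi)) => [|i /andP[ai ib]|i i_in].
  - exact: ltnW.
  - case: (ltngtP a i) ai => // [ai|/val_inj <- //] _.
    case: (ltngtP i b) ib => // [ib|/val_inj -> //] _.
    by apply: contraNT no_gap => i_out; apply/existsP; exists i; rewrite ai ib i_out.
  - by apply/andP; split; [exact: a_min | exact: b_max].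
case/p_simple => size_ab; first lia.
by case: proper => [/(_ _ a_in)|/(_ _ b_in)]; move: (ltn_ord b) size_ab; lia.
Qed.
End SimplePermutations.

Section MaximumEntry.
Variables (n : nat) (p : 'S_n) (m : 'I_n).
Hypothesis p_m : p m = n.-1 :> nat.
Hypothesis p_simple : simple_perm p.
Hypothesis p_avoids3142 : avoids p [:: 3; 1; 4; 2].
Hypothesis p_avoids4312 : avoids p [:: 4; 3; 1; 2].

Lemma lt_max_entry (i : 'I_n) : i != m -> p i < n.-1.
Proof.
move=> i_neq_m; have : p i != p m :> nat by apply: contra i_neq_m => /eqP/perm_val_inj ->.
by move: (ltn_ord (p i)); rewrite p_m; lia.
Qed.

Lemma inversion_range_before_max (u v : 'I_n) : u < v -> v < m -> p v < p u ->
  forall k : 'I_n, p v <= p k <= p u -> k < m.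
Proof.
move=> uv vm vu k k_in; rewrite ltnNge; apply/negP => mk.
have pu_lt : p u < n.-1 by apply: lt_max_entry; rewrite -val_eqE /=; lia.
have mk' : m < k by case: ltngtP mk => // /val_inj eq_mk; move: k_in; rewrite -eq_mk p_m; lia.
have k_neq (w : 'I_n) : w < m -> p k != p w :> nat.
  by move=> wm; apply/eqP => /perm_val_inj eq_kw; move: mk'; rewrite eq_kw; lia.
apply: p_avoids3142; apply/contains_3142P; exists u, v, m, k; rewrite p_m.
by move: (k_neq u) (k_neq v); split=> //; lia.
Qed.

Lemma increasing_upto_max (i j : 'I_n) : i < j -> j <= m -> p i < p j.
Proof.
move=> ij; case: (ltngtP j m) => // [jm|/val_inj eq_jm] _; last first.
  by move: ij; rewrite eq_jm p_m => im; rewrite lt_max_entry // -val_eqE /=; lia.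
case: (ltngtP (p i) (p j)) => // [ji|/perm_val_inj eq_ij]; last by move: ij; rewrite eq_ij ltnn.
pose Q lo hi := [/\ lo < hi, hi < n & forall k : 'I_n, lo <= p k <= hi -> k < m].
exfalso; apply: (@bounded_widening_absurd n Q _ _ (p j) (p i)).
- by move=> lo hi [].
- move=> lo hi [lt_lo_hi lt_hi_n range_before_m].
  have [u [q [v [uq qv u_in v_in q_out]]]] : exists u q v : 'I_n,
      [/\ u < q, q < v, lo <= p u <= hi, lo <= p v <= hi & ~~ (lo <= p q <= hi)].
    apply: simple_range_split => //; right => k /range_before_m; move: (ltn_ord m); lia.
  have vm := range_before_m _ v_in.
  case: (leqP (p q) hi) => [q_le|q_gt].
    exists (p q : nat), hi; split; last by move: q_out; rewrite q_le andbT; lia.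
    split=> // [|k k_in]; first lia.
    case: (leqP lo (p k)) => [lo_le|k_lt]; first by apply: range_before_m; lia.
    by apply: (@inversion_range_before_max u q) => //; lia.
  exists lo, (p q : nat); split; last lia.
  split=> // [|k k_in]; first lia.
  case: (leqP (p k) hi) => [k_le|k_gt]; first by apply: range_before_m; lia.
  by apply: (@inversion_range_before_max q v) => //; lia.
- by split=> //; apply: inversion_range_before_max => //; lia.
Qed.

Lemma avoids312_after_max (i j k : 'I_n) :
  m < i -> i < j -> j < k -> p j < p k -> p k < p i -> False.
Proof.
move=> mi ij jk jk' ki; apply: p_avoids4312; apply/contains_4312P.
exists m, i, j, k; rewrite p_m; split=> //.
by rewrite jk' ki lt_max_entry // -val_eqE /=; lia.
Qed.

Section RightOfMax.
Variable r : 'I_n.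
Hypothesis r_def : r = m.+1 :> nat.

Lemma pos_between_132 (y z k : 'I_n) : r < y -> y < z ->
  p r < p z -> p z < p k -> p k < p y -> m.+1 < k < z.
Proof.
move=> ry yz rz zk ky.
have py_lt : p y < n.-1 by rewrite lt_max_entry // -val_eqE /=; lia.
case: (ltngtP k m) => [km|mk|/val_inj eq_km]; last by move: ky; rewrite eq_km p_m; lia.
  exfalso; apply: p_avoids3142; apply/contains_3142P.
  by exists k, r, y, z; split=> //; lia.
case: (ltngtP k r) => [|rk|/val_inj eq_kr]; [lia| |by move: zk; rewrite eq_kr; lia].
case: (ltngtP k z) => [kz|zk'|/val_inj eq_kz]; [lia| |by move: zk; rewrite eq_kz ltnn].
by exfalso; apply: (@avoids312_after_max y z k) => //; lia.
Qed.

Let block lo hi := [/\ lo < hi, hi < n, p r < lo &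
  forall k j : 'I_n, p j = lo :> nat -> lo <= p k <= hi -> m.+1 < k <= j].

Lemma block_of_132 (y z : 'I_n) : r < y -> y < z -> p r < p z -> p z < p y ->
  block (p z) (p y).
Proof.
move=> ry yz rz zy; split=> // k j p_j k_in.
have -> : j = z by apply: (@perm_val_inj _ p).
case: (eqVneq k y) => [->|k_neq_y]; first lia.
case: (eqVneq k z) => [->|k_neq_z]; first lia.
have zk : p z < p k.
  by rewrite ltn_neqAle eq_sym (contra_neq (@perm_val_inj _ p k z)) //; lia.
have ky : p k < p y.
  by rewrite ltn_neqAle (contra_neq (@perm_val_inj _ p k y)) //; lia.
by have := pos_between_132 ry yz rz zk ky; lia.
Qed.

Lemma block_widen lo hi : block lo hi ->
  exists lo' hi', block lo' hi' /\ hi - lo < hi' - lo'.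
Proof.
move=> [lt_lo_hi lt_hi_n r_lo range_pos].
have [b p_b] := perm_val_surj p (ltn_trans lt_lo_hi lt_hi_n).
have [u [q [v [uq qv u_in v_in q_out]]]] : exists u q v : 'I_n,
    [/\ u < q, q < v, lo <= p u <= hi, lo <= p v <= hi & ~~ (lo <= p q <= hi)].
  by apply: simple_range_split => //; left => k /(range_pos k b p_b); lia.
have := range_pos u b p_b u_in; have := range_pos v b p_b v_in.
case: (leqP (p q) hi) => [q_le|q_gt] v_pos u_pos.
  have q_lt : p q < lo by move: q_out; rewrite q_le andbT -ltnNge.
  have b_neq_u : b != u by apply/eqP=> eq_bu; move: uq qv v_pos; rewrite -eq_bu; lia.
  have u_lt : lo < p u.
    by rewrite ltn_neqAle -p_b (contra_neq (@perm_val_inj _ p b u)) //; lia.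
  by exfalso; apply: (@avoids312_after_max u q b); lia.
exists lo, (p q : nat); split; last lia.
split=> // [|k j p_j k_in]; first lia.
have -> : j = b by apply: (@perm_val_inj _ p); rewrite p_j p_b.
case: (leqP (p k) hi) => [k_le|k_gt]; first by apply: range_pos; lia.
case: (eqVneq k q) => [->|k_neq_q]; first lia.
have kq : p k < p q.
  by rewrite ltn_neqAle (contra_neq (@perm_val_inj _ p k q)) //; lia.
by have := @pos_between_132 q b k; rewrite p_b; lia.
Qed.

Lemma no_132_right_of (y z : 'I_n) : r < y -> y < z -> p r < p z -> p y < p z.
Proof.
move=> ry yz rz; case: (ltngtP (p y) (p z)) => // [zy|/perm_val_inj eq_yz].
  by case: (@bounded_widening_absurd n block _ block_widen _ _ (block_of_132 ry yz rz zy)) => ? ? [].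
by move: yz; rewrite eq_yz ltnn.
Qed.
End RightOfMax.

Lemma after_max_not_between (x y z : 'I_n) :
  m < x -> m < y -> x < z -> y < z -> ~~ (p x < p z < p y).
Proof.
move=> mx my xz yz; apply/negP => /andP[xz' zy].
have xy : x < y.
  case: (ltngtP x y) => // [yx|/val_inj eq_xy]; last by move: xz'; rewrite eq_xy; lia.
  by exfalso; apply: (@avoids312_after_max y x z).
have lt_r_n : m.+1 < n by move: (ltn_ord z); lia.
pose r := Ordinal lt_r_n; have r_val : r = m.+1 :> nat by [].
have rz : p r < p z.
  have : r <= x by [].
  case: (ltngtP r x) => // [rx|/val_inj ->//] _.
  case: (ltngtP (p r) (p z)) => // [zr|/perm_val_inj eq_rz]; last by move: rx; rewrite eq_rz; lia.
  by exfalso; apply: (@avoids312_after_max r x z) => //=; lia.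
by have := @no_132_right_of r r_val y z; lia.
Qed.
End MaximumEntry.

Section Construction.
Variables (n : nat) (p : 'S_n) (m : 'I_n) (c : nat).
Hypothesis increasing_upto_m : forall i j : 'I_n, i < j -> j <= m -> p i < p j.
Hypothesis after_m_not_between : forall x y z : 'I_n,
  m < x -> m < y -> x < z -> y < z -> ~~ (p x < p z < p y).
Hypothesis c_def : forall r : 'I_n, r = m.+1 :> nat -> p r = c :> nat.

Definition last_above (v : nat) := \max_(j : 'I_n | (m < j) && (c <= p j <= v)) j.
Definition last_below (v : nat) := \max_(j : 'I_n | (m < j) && (v <= p j < c)) j.

(* [offset v] encodes the pair (last_above v, v), resp. (last_below v, n - v),
   lexicographically; for an entry right of m the first component is its own
   position, so offsets grow along the suffix while staying monotone in v. *)
Definition offset (v : nat) :=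
  if c <= v then last_above v * n.+1 + v else last_below v * n.+1 + (n - v).

Lemma last_above_le v : last_above v <= n.-1.
Proof. by apply/bigmax_leqP => j _; move: (ltn_ord j); lia. Qed.

Lemma last_below_le v : last_below v <= n.-1.
Proof. by apply/bigmax_leqP => j _; move: (ltn_ord j); lia. Qed.

Lemma offset_lt v : v <= n -> offset v < n.+1 * n.+1.
Proof.
move=> le_vn; rewrite /offset; have := last_above_le v; have := last_below_le v.
by case: ifP; nia.
Qed.

Lemma offset_above_mono v w : c <= v -> v < w -> offset v < offset w.
Proof.
move=> cv vw; rewrite /offset cv ifT; last lia.
have : last_above v <= last_above w.
  by apply/bigmax_leqP => j /andP[mj /andP[cj jv]]; apply: leq_bigmax_cond; rewrite mj cj; lia.
nia.
Qed.

Lemma offset_below_anti v w : v < w -> w < c -> w <= n -> offset w < offset v.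
Proof.
move=> vw wc wn; rewrite /offset ifF; last lia; rewrite ifF; last lia.
have : last_below w <= last_below v.
  by apply/bigmax_leqP => j /andP[mj /andP[wj jc]]; apply: leq_bigmax_cond; rewrite mj jc; lia.
nia.
Qed.

Lemma offset_below_gt0 v : v < n -> v < c -> 0 < offset v.
Proof. by move=> vn vc; rewrite /offset ifF; lia. Qed.

Lemma last_above_after_m (i : 'I_n) : m < i -> c <= p i -> last_above (p i) = i.
Proof.
move=> mi ci; apply/eqP; rewrite eqn_leq; apply/andP; split; last first.
  by apply: (leq_bigmax_cond i); rewrite mi ci leqnn.
apply/bigmax_leqP => j /andP[mj /andP[cj ji]]; rewrite leqNgt; apply/negP => ij.
have lt_r_n : m.+1 < n by move: (ltn_ord i); lia.
have := c_def (r := Ordinal lt_r_n) erefl => p_r.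
have j_neq_r : p j != c :> nat.
  by apply/eqP=> eq_jc; have /perm_val_inj eq_jr := etrans eq_jc (esym p_r); move: ij; rewrite eq_jr /=; lia.
have j_neq_i : p j != p i :> nat.
  by apply/eqP=> /perm_val_inj eq_ji; move: ij; rewrite eq_ji ltnn.
have := after_m_not_between (x := Ordinal lt_r_n) (y := i) (z := j).
by rewrite p_r /=; lia.
Qed.

Lemma last_below_after_m (i : 'I_n) : m < i -> p i < c -> last_below (p i) = i.
Proof.
move=> mi ic; apply/eqP; rewrite eqn_leq; apply/andP; split; last first.
  by apply: (leq_bigmax_cond i); rewrite mi ic leqnn.
apply/bigmax_leqP => j /andP[mj /andP[ij jc]]; rewrite leqNgt; apply/negP => lt_ij.
have lt_r_n : m.+1 < n by move: (ltn_ord i); lia.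
have := c_def (r := Ordinal lt_r_n) erefl => p_r.
have j_neq_i : p j != p i :> nat.
  by apply/eqP=> /perm_val_inj eq_ji; move: lt_ij; rewrite eq_ji ltnn.
have := after_m_not_between (x := i) (y := Ordinal lt_r_n) (z := j).
by rewrite p_r /=; lia.
Qed.

Lemma offset_after_m (i : 'I_n) : m < i ->
  exists2 rem, rem <= n & offset (p i) = i * n.+1 + rem.
Proof.
move=> mi; rewrite /offset; case: leqP => [ci|ic].
  by exists (p i : nat); [exact: ltnW | rewrite last_above_after_m].
by exists (n - p i); [exact: leq_subr | rewrite last_below_after_m].
Qed.

Lemma offset_after_m_mono (i j : 'I_n) : m < i -> i < j -> offset (p i) < offset (p j).
Proof.
move=> mi ij; have [ri le_ri ->] := offset_after_m mi.
have [rj le_rj ->] := offset_after_m (ltn_trans mi ij).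
have : i.+1 * n.+1 <= j * n.+1 by rewrite leq_mul2r ij orbT.
nia.
Qed.

Local Open Scope ring_scope.

Lemma in_geom_of_shape (R : realType) : in_geom R p.
Proof.
pose S : R := (n.+1 * n.+1)%:R.
pose t v : R := (offset v)%:R / S.
pose y (i : 'I_n) : R := if (c <= p i)%N then 1 + t (p i) else 1 - t (p i).
pose x (i : 'I_n) : R := if (i <= m)%N then y i else 2 + t (p i).
have S_gt0 : 0 < S by rewrite ltr0n muln_gt0.
have t_ge0 v : 0 <= t v by rewrite divr_ge0 // ltW.
have t_lt1 v : (v <= n)%N -> t v < 1.
  by move=> le_vn; rewrite ltr_pdivrMr // mul1r ltr_nat offset_lt.
have t_lt v w : (offset v < offset w)%N -> t v < t w.
  by move=> lt_vw; rewrite ltr_pM2r ?invr_gt0 // ltr_nat.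
have t_gt0 v : (v < n)%N -> (v < c)%N -> 0 < t v.
  by move=> vn vc; rewrite divr_gt0 // ltr0n offset_below_gt0.
have y_mono i j : (p i < p j)%N -> y i < y j.
  move=> ij; have := ltn_ord (p j); have := ltn_ord (p i); rewrite /y.
  case: (leqP c (p i)) => ci; case: (leqP c (p j)) => cj vi vj.
  - by rewrite ltrD2l t_lt // offset_above_mono.
  - lia.
  - by have := t_gt0 _ vi ci; have := t_ge0 (p j); lra.
  - by rewrite ltrD2l ltrN2 t_lt // offset_below_anti // ltnW.
have y_lt2 i : y i < 2.
  by rewrite /y; have := t_lt1 (p i) (ltnW (ltn_ord _)); have := t_ge0 (p i); case: ifP; lra.
exists x, y; split; [|split] => // [i j ij|i].
  rewrite /x; case: (leqP j m) => jm.
    by rewrite ifT ?y_mono ?increasing_upto_m //; lia.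
  case: (leqP i m) => im; first by have := y_lt2 i; have := t_ge0 (p j); lra.
  by rewrite ltrD2l t_lt // offset_after_m_mono.
rewrite /in_figure /x /y; have := t_lt1 (p i) (ltnW (ltn_ord _)); have := t_ge0 (p i).
case: (leqP i m) => im.
  by left; split=> //; apply/andP; split; have := y_lt2 i; rewrite /y; case: ifP; lra.
by case: ifP => _; [right; right | right; left]; (split; [apply/andP; split|]); lra.
Qed.
End Construction.


Section Figure.
Variable R : realType.
Local Open Scope ring_scope.

Definition on_right_arms (x y : R) := 2 <= x <= 3 /\ (y = 3 - x \/ y = x - 1).

Lemma on_right_arms_of_descent (a b c d : R) : in_figure a b -> in_figure c d ->
  a < c -> d < b -> on_right_arms c d.
Proof.
move=> fig_ab fig_cd ac db.
case: fig_ab fig_cd => [[/andP[? ?] ?]|[[/andP[? ?] ?]|[/andP[? ?] ?]]]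
  [[/andP[? ?] ?]|[[/andP[? ?] ?]|[/andP[? ?] ?]]];
  try lra; (split; [apply/andP; split; lra | first [left; lra | right; lra]]).
Qed.

Lemma on_right_arms_of_right (a b c d : R) : on_right_arms a b -> in_figure c d ->
  a < c -> on_right_arms c d.
Proof.
move=> [/andP[? _] _] fig_cd ac.
case: fig_cd => [[/andP[? ?] ?]|[[/andP[? ?] ?]|[/andP[? ?] ?]]];
  try lra; (split; [apply/andP; split; lra | first [left; lra | right; lra]]).
Qed.

(* On the right arms the distance |y - 1| increases with x. *)
Lemma on_right_arms_not_between (a b c d e f : R) :
  on_right_arms a b -> on_right_arms c d -> on_right_arms e f -> a < c -> c < e ->
  ~~ (d < f < b) /\ ~~ (b < f < d).
Proof.
move=> [/andP[? ?] ab] [/andP[? ?] cd] [/andP[? ?] ef] ac ce.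
by split; apply/negP => /andP[? ?]; case: ab => ?; case: cd => ?; case: ef => ?; lra.
Qed.

Section PointsOnFigure.
Variables (n : nat) (p : 'S_n) (x y : 'I_n -> R).
Hypothesis x_incr : forall i j : 'I_n, (i < j)%N -> x i < x j.
Hypothesis y_incr : forall i j : 'I_n, (p i < p j)%N -> y i < y j.
Hypothesis on_figure : forall i : 'I_n, in_figure (x i) (y i).

Lemma on_right_arms_right_below (i w : 'I_n) :
  (i < w)%N -> (p w < p i)%N -> on_right_arms (x w) (y w).
Proof.
by move=> iw wi; exact: on_right_arms_of_descent (on_figure i) (on_figure w) (x_incr iw) (y_incr wi).
Qed.

Lemma figure_avoids_4312 : avoids p [:: 4; 3; 1; 2].
Proof.
move=> /contains_4312P[i [j [k [l [ij jk kl [/andP[kl' lj] ji]]]]]].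
have [jR kR lR] : [/\ on_right_arms (x j) (y j), on_right_arms (x k) (y k)
                    & on_right_arms (x l) (y l)].
  by split; apply: (@on_right_arms_right_below i); lia.
have [/negP + _] := on_right_arms_not_between jR kR lR (x_incr jk) (x_incr kl).
by apply; rewrite !y_incr.
Qed.

Lemma figure_avoids_3142 : avoids p [:: 3; 1; 4; 2].
Proof.
move=> /contains_3142P[i [j [k [l [ij jk kl [/andP[jl li] ik]]]]]].
have jR : on_right_arms (x j) (y j) by apply: (@on_right_arms_right_below i); lia.
have kR := on_right_arms_of_right jR (on_figure k) (x_incr jk).
have lR : on_right_arms (x l) (y l) by apply: (@on_right_arms_right_below i); lia.
have [_ /negP] := on_right_arms_not_between jR kR lR (x_incr jk) (x_incr kl).
by apply; rewrite !y_incr //; lia.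
Qed.
End PointsOnFigure.
End Figure.

Theorem proposition4p1 (R : realType) (n : nat) (p : 'S_n) :
  (simple_perm p /\ avoids p [:: 4; 3; 1; 2]%N /\ avoids p [:: 3; 1; 4; 2]%N)
  <-> (simple_perm p /\ in_geom R p).
Proof.
split=> [[p_simple [p_4312 p_3142]]|[p_simple [x [y [x_incr [y_incr on_fig]]]]]]; last first.
  split=> //; split; first exact: figure_avoids_4312 x_incr y_incr on_fig.
  exact: figure_avoids_3142 x_incr y_incr on_fig.
split=> //; case: n p p_simple p_4312 p_3142 => [|n] p p_simple p_4312 p_3142.
  by exists (fun _ => 0%R), (fun _ => 0%R); do !split; case.
pose m := (p^-1 ord_max)%g; have p_m : p m = n.+1.-1 :> nat by rewrite permKV.
apply: (@in_geom_of_shape _ p m (p (inord m.+1))).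
- by move=> i j ij jm; exact: (increasing_upto_max p_m).
- exact: (after_max_not_between p_m).
- by move=> r r_val; congr (nat_of_ord (p _)); apply: val_inj; rewrite /= r_val inordK // -r_val.
Qed.
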